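(* Let $f:\mathbb{Z}^3\to\mathbb{C}$ and define $g(k_1,k_2,k_3,k_4)=\sum_{(l_1,l_2,l_3)}^{(k_1,k_2,k_3,k_4)}f(l_1,l_2,l_3)$. Then \begin{multline*} T'_{2,3}\, g(k_1,k_2,k_3,k_4) = - \frac{1}{2} \left( \sum_{l_1=k_2+1}^{k_3} \sum_{l_2=k_2+1}^{k_3} \sum_{l_3=k_2}^{k_4} T'_{1,2} f(l_1,l_2,l_3) + \sum_{l_1=k_1}^{k_2+1} \sum_{l_2=k_2}^{k_3-1} \sum_{l_3=k_2}^{k_3-1} T'_{2,3} f(l_1,l_2,l_3) \right) \\ + \frac{1}{2} \left( \sum_{l_1=k_2}^{k_3-1} \sum_{l_2=k_2}^{k_3-1} \Delta_2 (\operatorname{id} + E_1) T'_{1,2} f(l_1,l_2,k_2) - \sum_{l_2=k_2}^{k_3-1} \sum_{l_3=k_2}^{k_3-1} \Delta_2 (\operatorname{id} + E_3) T'_{2,3} f(k_2+1,l_2,l_3) \right) \\ + \frac{1}{2} \Big( T'_{1,2} f(k_2,k_2,k_2+1) - T'_{1,2} f(k_2,k_2,k_3+1) + T'_{2,3} f(k_2,k_2,k_2) - T'_{2,3} f(k_3,k_2,k_2) \Big) \\ - T'_{1,2} f(k_2,k_3,k_2+1) - T'_{2,3} f(k_2,k_2,k_3). \end{multline*} Moreover, for every function $h:\mathbb{Z}^2\to\mathbb{C}$, $$T'_{1,2}\left(\sum_{(l_1,l_2)}^{(k_1,k_2,k_3)}h(l_1,l_2)\right)(k_1,k_2,k_3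)=-\frac12\sum_{l_1=k_1}^{k_2-1}\sum_{l_2=k_1}^{k_2-1}T'_{1,2}\,h(l_1,l_2).$$
   Context: Extended interval sums: $\sum_{i=a}^b F(i)=F(a)+\cdots+F(b)$ if $a\le b$, $=0$ if $b=a-1$, and $=-F(b+1)-\cdots-F(a-1)$ if $b+1\le a-1$. For functions $A$ on $\mathbb{Z}^{m-1}$ and $(k_1,\ldots,k_m)\in\mathbb{Z}^m$ define recursively $\sum_{(l_1)}^{(k_1,k_2)}A(l_1)=\sum_{l_1=k_1}^{k_2}A(l_1)$ and, for $m>2$, $$\sum_{(l_1,\ldots,l_{m-1})}^{(k_1,\ldots,k_m)}A=\sum_{(l_1,\ldots,l_{m-2})}^{(k_1,\ldots,k_{m-1})}\sum_{l_{m-1}=k_{m-1}+1}^{k_m}A(l_1,\ldots,l_{m-1})+\sum_{(l_1,\ldots,l_{m-2})}^{(k_1,\ldots,k_{m-1}-1)}A(l_1,\ldots,l_{m-2},k_{m-1}).$$ For a function of several integer variables, $E_j$ is the shift in the $j$-th variable ($E_jF(\ldots,x_j,\ldots)=F(\ldots,x_j+1,\ldots)$), $\Delta_j=E_j-\operatorname{id}$, and $S_{j,j+1}$ swaps the $j$-th and $(j+1)$-st variables; products of operators are compositions. Define $T'_{j,j+1}=(\operatorname{id}+S_{j,j+1})(\operatorname{id}+E_{j+1}\Delta_j)$. Notation such as $T'_{1,2}f(k_2,k_2,k_2+1)$ or $\Delta_2(\operatorname{id}+E_1)T'_{1,2}f(l_1,l_2,k_2)$ means: apply the operator to $f$ as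 a function of all its variables, then evaluate at the indicated arguments. *)

From mathcomp Require Import all_boot all_order all_algebra.
From mathcomp Require Import complex.
From mathcomp Require Import Rstruct.
Set Implicit Arguments. Unset Strict Implicit. Unset Printing Implicit Defensive.
Import Order.TTheory GRing.Theory Num.Theory.
Local Open Scope ring_scope.

Definition C : fieldType := (Rdefinitions.R)[i].

(* Extended interval sum  \sum_{i=a}^{b} F(i):
   F(a)+...+F(b) if a <= b;  0 if b = a-1;  -F(b+1)-...-F(a-1) if b+1 <= a-1. *)
Definition isum (F : int -> C) (a b : int) : C :=
  if a <= b + 1 then \sum_(j < absz (b + 1 - a)%R) F (a + j%:Z)
  else - \sum_(j < absz (a - 1 - b)%R) F (b + 1 + j%:Z).

Definition msum1 (A : int -> C) (k1 k2 : int) : C := isum A k1 k2.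

Definition msum2 (A : int -> int -> C) (k1 k2 k3 : int) : C :=
  msum1 (fun l1 => isum (fun l2 => A l1 l2) (k2 + 1) k3) k1 k2
  + msum1 (fun l1 => A l1 k2) k1 (k2 - 1).

Definition msum3 (A : int -> int -> int -> C) (k1 k2 k3 k4 : int) : C :=
  msum2 (fun l1 l2 => isum (fun l3 => A l1 l2 l3) (k3 + 1) k4) k1 k2 k3
  + msum2 (fun l1 l2 => A l1 l2 k3) k1 k2 (k3 - 1).

Definition fun2 := int -> int -> C.
Definition fun3 := int -> int -> int -> C.
Definition fun4 := int -> int -> int -> int -> C.

Definition E1_2 (f : fun2) : fun2 := fun x y => f (x + 1) y.
Definition E2_2 (f : fun2) : fun2 := fun x y => f x (y + 1).
Definition D1_2 (f : fun2) : fun2 := fun x y => E1_2 f x y - f x y.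
Definition S12_2 (f : fun2) : fun2 := fun x y => f y x.

Definition E1_3 (f : fun3) : fun3 := fun x y z => f (x + 1) y z.
Definition E2_3 (f : fun3) : fun3 := fun x y z => f x (y + 1) z.
Definition E3_3 (f : fun3) : fun3 := fun x y z => f x y (z + 1).
Definition D1_3 (f : fun3) : fun3 := fun x y z => E1_3 f x y z - f x y z.
Definition D2_3 (f : fun3) : fun3 := fun x y z => E2_3 f x y z - f x y z.
Definition S12_3 (f : fun3) : fun3 := fun x y z => f y x z.
Definition S23_3 (f : fun3) : fun3 := fun x y z => f x z y.

Definition E2_4 (f : fun4) : fun4 := fun x y z w => f x (y + 1) z w.
Definition E3_4 (f : fun4) : fun4 := fun x y z w => f x y (z + 1) w.
Definition D2_4 (f : fun4) : fun4 := fun x y z w => E2_4 f x y z w - f x y z w.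
Definition S23_4 (f : fun4) : fun4 := fun x y z w => f x z y w.

Definition T12_2 (f : fun2) : fun2 :=
  let G : fun2 := fun x y => f x y + E2_2 (D1_2 f) x y in
  fun x y => G x y + S12_2 G x y.

Definition T12_3 (f : fun3) : fun3 :=
  let G : fun3 := fun x y z => f x y z + E2_3 (D1_3 f) x y z in
  fun x y z => G x y z + S12_3 G x y z.

Definition T23_3 (f : fun3) : fun3 :=
  let G : fun3 := fun x y z => f x y z + E3_3 (D2_3 f) x y z in
  fun x y z => G x y z + S23_3 G x y z.

Definition T23_4 (f : fun4) : fun4 :=
  let G : fun4 := fun x y z w => f x y z w + E3_4 (D2_4 f) x y z w in
  fun x y z w => G x y z w + S23_4 G x y z w.

Definition IE1_3 (f : fun3) : fun3 := fun x y z => f x y z + E1_3 f x y z.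
Definition IE3_3 (f : fun3) : fun3 := fun x y z => f x y z + E3_3 f x y z.

(* Every f : Z^3 -> C is the mixed difference D1 D2 D3 P of a discrete
   antiderivative P.  The operators T', E_j, D_j commute with D1 D2 D3: they are
   combinations of shifts, which commute with differences, and of swaps, which
   commute with the symmetric mixed difference.  Extended interval sums
   telescope for arbitrary bounds, so every iterated sum of D1 D2 D3 P over a
   box, in particular the nested sums defining msum3, is the alternating sum of
   P over the corners of the box.  Both sides of each identity thereby become
   explicit linear combinations of values of P, and the identities are checked
   by normalisation in the field C. *)

From mathcomp Require Import all_boot all_order all_algebra.
From mathcomp Require Import complex.
From mathcomp Require Import Rstruct.
From mathcomp Require Import ring.
From Stdlib Require Import FunctionalExtensionality.
Set Implicit Arguments.
Unset Strict Implicit.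
Unset Printing Implicit Defensive.

Import Order.TTheory GRing.Theory Num.Theory.
Local Open Scope ring_scope.

Lemma eq_isum (F G : int -> C) a b :
  (forall n, F n = G n) -> isum F a b = isum G a b.
Proof. by move=> /functional_extensionality ->. Qed.

Lemma isum_singleton (F : int -> C) a : isum F a a = F a.
Proof.
by rewrite /isum lerDl ler01 addrAC subrr add0r big_ord1 addr0.
Qed.

Lemma isum_telescope (S F : int -> C) a b :
  (forall n, F n = S (n + 1) - S n) -> isum F a b = S (b + 1) - S a.
Proof.
move=> dF; have sum_dF c (n : nat) :
    \sum_(j < n) F (c + j%:Z) = S (c + n%:Z) - S c.
  elim: n => [|n IHn]; first by rewrite big_ord0 addr0 subrr.
  have -> : c + n.+1%:Z = c + n%:Z + 1 by rewrite -addn1 PoszD addrA.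
  by rewrite big_ord_recr /= IHn dF addrC addrA subrK.
rewrite /isum; case: ifP => [le_ab | /negbT].
  by rewrite sum_dF gez0_abs ?subr_ge0 // (addrC a) subrK.
rewrite -ltNge => /ltW le_ba.
rewrite sum_dF gez0_abs ?subr_ge0 ?lerBrDr //.
have -> : b + 1 + (a - 1 - b) = a by ring.
by rewrite opprB.
Qed.

Section Antidifference.
Variable V : zmodType.

Definition antidiff (F : int -> V) (n : int) : V :=
  match n with
  | Posz m => \sum_(j < m) F j%:Z
  | Negz m => - \sum_(j < m.+1) F (- (j.+1)%:Z)
  end.

Lemma antidiffS F n : antidiff F (n + 1) - antidiff F n = F n.
Proof.
case: n => [m|[|m]].
- by rewrite -PoszD addn1 /= big_ord_recr /= addrAC subrr add0r.
- by rewrite /= big_ord0 big_ord1 sub0r opprK.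
- rewrite (_ : Negz m.+1 + 1 = Negz m); last first.
    by rewrite !NegzE -addn1 PoszD opprD addrK.
  by rewrite /= (big_ord_recr m.+1) /= opprK addKr NegzE.
Qed.

End Antidifference.

Definition D3_3 (f : fun3) : fun3 := fun x y z => E3_3 f x y z - f x y z.
Definition D2_2 (f : fun2) : fun2 := fun x y => E2_2 f x y - f x y.

Definition mixdiff3 (f : fun3) : fun3 := D3_3 (D2_3 (D1_3 f)).
Definition mixdiff2 (f : fun2) : fun2 := D2_2 (D1_2 f).

Definition antidiff3 (f : fun3) : fun3 := fun x y z =>
  antidiff (fun a => antidiff (fun b => antidiff (fun c => f a b c) z) y) x.
Definition antidiff2 (f : fun2) : fun2 := fun x y =>
  antidiff (fun a => antidiff (fun b => f a b) y) x.

Ltac funext3 := apply: functional_extensionality_dep => x;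
  apply: functional_extensionality_dep => y;
  apply: functional_extensionality_dep => z.

Lemma antidiff3K : cancel antidiff3 mixdiff3.
Proof.
move=> f; funext3.
by rewrite /mixdiff3 /D3_3 /D2_3 /D1_3 /E3_3 /E2_3 /E1_3 /antidiff3 !antidiffS.
Qed.

Lemma antidiff2K : cancel antidiff2 mixdiff2.
Proof.
move=> f; apply: functional_extensionality_dep => x.
apply: functional_extensionality_dep => y.
by rewrite /mixdiff2 /D2_2 /D1_2 /E2_2 /E1_2 /antidiff2 !antidiffS.
Qed.

Lemma T12_3_mixdiff3 f : T12_3 (mixdiff3 f) = mixdiff3 (T12_3 f).
Proof. by funext3; rewrite /mixdiff3 /T12_3 /S12_3 /D3_3 /D2_3 /D1_3 /E3_3 /E2_3 /E1_3; ring. Qed.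

Lemma T23_3_mixdiff3 f : T23_3 (mixdiff3 f) = mixdiff3 (T23_3 f).
Proof. by funext3; rewrite /mixdiff3 /T23_3 /S23_3 /D3_3 /D2_3 /D1_3 /E3_3 /E2_3 /E1_3; ring. Qed.

Lemma D2_3_mixdiff3 f : D2_3 (mixdiff3 f) = mixdiff3 (D2_3 f).
Proof. by funext3; rewrite /mixdiff3 /D3_3 /D2_3 /D1_3 /E3_3 /E2_3 /E1_3; ring. Qed.

Lemma IE1_3_mixdiff3 f : IE1_3 (mixdiff3 f) = mixdiff3 (IE1_3 f).
Proof. by funext3; rewrite /mixdiff3 /IE1_3 /D3_3 /D2_3 /D1_3 /E3_3 /E2_3 /E1_3; ring. Qed.

Lemma IE3_3_mixdiff3 f : IE3_3 (mixdiff3 f) = mixdiff3 (IE3_3 f).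
Proof. by funext3; rewrite /mixdiff3 /IE3_3 /D3_3 /D2_3 /D1_3 /E3_3 /E2_3 /E1_3; ring. Qed.

Lemma T12_2_mixdiff2 f : T12_2 (mixdiff2 f) = mixdiff2 (T12_2 f).
Proof.
apply: functional_extensionality_dep => x; apply: functional_extensionality_dep => y.
by rewrite /mixdiff2 /T12_2 /S12_2 /D2_2 /D1_2 /E2_2 /E1_2; ring.
Qed.

Definition boxdiff3 (Q : fun3) x0 x1 y0 y1 z0 z1 : C :=
  Q x1 y1 z1 - Q x0 y1 z1 - Q x1 y0 z1 + Q x0 y0 z1
  - (Q x1 y1 z0 - Q x0 y1 z0 - Q x1 y0 z0 + Q x0 y0 z0).

Definition boxdiff2 (Q : fun2) x0 x1 y0 y1 : C :=
  Q x1 y1 - Q x0 y1 - Q x1 y0 + Q x0 y0.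

Lemma isum123_mixdiff3 Q a1 b1 a2 b2 a3 b3 :
  isum (fun l1 => isum (fun l2 => isum (fun l3 =>
    mixdiff3 Q l1 l2 l3) a3 b3) a2 b2) a1 b1
  = boxdiff3 Q a1 (b1 + 1) a2 (b2 + 1) a3 (b3 + 1).
Proof.
have sum3 l1 l2 : isum (fun l3 => mixdiff3 Q l1 l2 l3) a3 b3
    = D2_3 (D1_3 Q) l1 l2 (b3 + 1) - D2_3 (D1_3 Q) l1 l2 a3.
  exact: isum_telescope.
have sum23 l1 : isum (fun l2 => isum (fun l3 => mixdiff3 Q l1 l2 l3) a3 b3) a2 b2
    = D1_3 Q l1 (b2 + 1) (b3 + 1) - D1_3 Q l1 a2 (b3 + 1)
      - (D1_3 Q l1 (b2 + 1) a3 - D1_3 Q l1 a2 a3).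
  rewrite (isum_telescope (S := fun m => D1_3 Q l1 m (b3 + 1) - D1_3 Q l1 m a3)).
    by ring.
  by move=> m; rewrite sum3 /D2_3 /E2_3; ring.
rewrite /boxdiff3 (isum_telescope (S := fun n => Q n (b2 + 1) (b3 + 1) - Q n a2 (b3 + 1)
                                  - (Q n (b2 + 1) a3 - Q n a2 a3))).
  by ring.
by move=> n; rewrite sum23 /D1_3 /E1_3; ring.
Qed.

Lemma isum12_mixdiff3 Q a1 b1 a2 b2 k :
  isum (fun l1 => isum (fun l2 => mixdiff3 Q l1 l2 k) a2 b2) a1 b1
  = boxdiff3 Q a1 (b1 + 1) a2 (b2 + 1) k (k + 1).
Proof.
rewrite -isum123_mixdiff3; apply: eq_isum => l1; apply: eq_isum => l2.
by rewrite isum_singleton.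
Qed.

Lemma isum13_mixdiff3 Q a1 b1 k a3 b3 :
  isum (fun l1 => isum (fun l3 => mixdiff3 Q l1 k l3) a3 b3) a1 b1
  = boxdiff3 Q a1 (b1 + 1) k (k + 1) a3 (b3 + 1).
Proof. by rewrite -isum123_mixdiff3; apply: eq_isum => l1; rewrite isum_singleton. Qed.

Lemma isum23_mixdiff3 Q k a2 b2 a3 b3 :
  isum (fun l2 => isum (fun l3 => mixdiff3 Q k l2 l3) a3 b3) a2 b2
  = boxdiff3 Q k (k + 1) a2 (b2 + 1) a3 (b3 + 1).
Proof. by rewrite -isum123_mixdiff3 isum_singleton. Qed.

Lemma isum1_mixdiff3 Q a1 b1 k k' :
  isum (fun l1 => mixdiff3 Q l1 k k') a1 b1
  = boxdiff3 Q a1 (b1 + 1) k (k + 1) k' (k' + 1).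
Proof.
rewrite -isum123_mixdiff3; apply: eq_isum => l1.
by rewrite isum_singleton /= isum_singleton.
Qed.

Lemma isum12_mixdiff2 Q a1 b1 a2 b2 :
  isum (fun l1 => isum (fun l2 => mixdiff2 Q l1 l2) a2 b2) a1 b1
  = boxdiff2 Q a1 (b1 + 1) a2 (b2 + 1).
Proof.
have sum2 l1 : isum (fun l2 => mixdiff2 Q l1 l2) a2 b2
    = D1_2 Q l1 (b2 + 1) - D1_2 Q l1 a2.
  exact: isum_telescope.
rewrite /boxdiff2 (isum_telescope (S := fun n => Q n (b2 + 1) - Q n a2)).
  by ring.
by move=> n; rewrite sum2 /D1_2 /E1_2; ring.
Qed.

Lemma isum1_mixdiff2 Q a1 b1 k :
  isum (fun l1 => mixdiff2 Q l1 k) a1 b1 = boxdiff2 Q a1 (b1 + 1) k (k + 1).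
Proof. by rewrite -isum12_mixdiff2; apply: eq_isum => l1; rewrite isum_singleton. Qed.

Lemma T12_3_msum2 (h : fun2) k1 k2 k3 :
  T12_3 (msum2 h) k1 k2 k3 =
    - (1 / 2) * isum (fun l1 => isum (fun l2 => T12_2 h l1 l2) k1 (k2 - 1)) k1 (k2 - 1).
Proof.
rewrite -[h]antidiff2K; move: (antidiff2 h) => Q.
rewrite T12_2_mixdiff2 isum12_mixdiff2.
rewrite /T12_3 /S12_3 /E2_3 /D1_3 /E1_3 /msum2 /msum1; cbv beta.
rewrite !isum12_mixdiff2 !isum1_mixdiff2.
rewrite /boxdiff2 /T12_2 /S12_2 /E2_2 /D1_2 /E1_2; cbv beta.
(* [field] sees the values of Q as atoms: their arguments, such as [k2 - 1 + 1],
   must first be made syntactically equal. *)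
by rewrite ?subrK ?addrK; field.
Qed.

Lemma T23_4_msum3 (f : fun3) k1 k2 k3 k4 :
  T23_4 (msum3 f) k1 k2 k3 k4 =
    - (1 / 2) *
      ( isum (fun l1 => isum (fun l2 => isum (fun l3 =>
            T12_3 f l1 l2 l3) k2 k4) (k2 + 1) k3) (k2 + 1) k3
      + isum (fun l1 => isum (fun l2 => isum (fun l3 =>
            T23_3 f l1 l2 l3) k2 (k3 - 1)) k2 (k3 - 1)) k1 (k2 + 1) )
    + (1 / 2) *
      ( isum (fun l1 => isum (fun l2 =>
            D2_3 (IE1_3 (T12_3 f)) l1 l2 k2) k2 (k3 - 1)) k2 (k3 - 1)
      - isum (fun l2 => isum (fun l3 =>
            D2_3 (IE3_3 (T23_3 f)) (k2 + 1) l2 l3) k2 (k3 - 1)) k2 (k3 - 1) )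
    + (1 / 2) *
      ( T12_3 f k2 k2 (k2 + 1) - T12_3 f k2 k2 (k3 + 1)
      + T23_3 f k2 k2 k2 - T23_3 f k3 k2 k2 )
    - T12_3 f k2 k3 (k2 + 1) - T23_3 f k2 k2 k3.
Proof.
rewrite -[f]antidiff3K; move: (antidiff3 f) => P.
rewrite !T12_3_mixdiff3 !T23_3_mixdiff3 !IE1_3_mixdiff3 !IE3_3_mixdiff3 !D2_3_mixdiff3.
rewrite !isum123_mixdiff3 isum12_mixdiff3 isum23_mixdiff3.
rewrite /T23_4 /S23_4 /E3_4 /D2_4 /E2_4 /msum3 /msum2 /msum1; cbv beta.
rewrite !isum123_mixdiff3 !isum13_mixdiff3 !isum12_mixdiff3 !isum1_mixdiff3.
rewrite /boxdiff3 /T12_3 /S12_3 /T23_3 /S23_3 /IE1_3 /IE3_3.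
rewrite /mixdiff3 /D3_3 /D2_3 /D1_3 /E3_3 /E2_3 /E1_3; cbv beta.
by rewrite ?subrK ?addrK; field.
Qed.

Theorem lemma3 :
  (forall (f : fun3) (k1 k2 k3 k4 : int),
    let g : fun4 := fun a b c d => msum3 f a b c d in
    T23_4 g k1 k2 k3 k4 =
      - (1 / 2) *
        ( isum (fun l1 => isum (fun l2 => isum (fun l3 =>
              T12_3 f l1 l2 l3) k2 k4) (k2 + 1) k3) (k2 + 1) k3
        + isum (fun l1 => isum (fun l2 => isum (fun l3 =>
              T23_3 f l1 l2 l3) k2 (k3 - 1)) k2 (k3 - 1)) k1 (k2 + 1) )
      + (1 / 2) *
        ( isum (fun l1 => isum (fun l2 =>
              D2_3 (IE1_3 (T12_3 f)) l1 l2 k2) k2 (k3 - 1)) k2 (k3 - 1)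
        - isum (fun l2 => isum (fun l3 =>
              D2_3 (IE3_3 (T23_3 f)) (k2 + 1) l2 l3) k2 (k3 - 1)) k2 (k3 - 1) )
      + (1 / 2) *
        ( T12_3 f k2 k2 (k2 + 1) - T12_3 f k2 k2 (k3 + 1)
        + T23_3 f k2 k2 k2 - T23_3 f k3 k2 k2 )
      - T12_3 f k2 k3 (k2 + 1) - T23_3 f k2 k2 k3)
  /\
  (forall (h : fun2) (k1 k2 k3 : int),
    T12_3 (fun a b c => msum2 h a b c) k1 k2 k3 =
      - (1 / 2) * isum (fun l1 => isum (fun l2 => T12_2 h l1 l2) k1 (k2 - 1)) k1 (k2 - 1)).
Proof. by split=> [f k1 k2 k3 k4 | h k1 k2 k3]; [exact: T23_4_msum3 | exact: T12_3_msum2]. Qed.
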